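(* Let $\lambda$ be a partition of $n$. Every connected component of the graph $\mathcal A_\lambda$ contains a reverse row superstandard tabloid and a column superstandard tabloid.
   Context: Fix $n\ge1$; $\overline i=i+n\mathbb Z$, $[\overline n]=\{\overline1,\dots,\overline n\}$. A tabloid of shape $\lambda$ is a sequence $(T_1,\dots,T_k)$, $k=\ell(\lambda)$, of pairwise disjoint subsets of $[\overline n]$ with $|T_r|=\lambda_r$ and union $[\overline n]$ (row 1 highest). $\tau(T)=\{\overline i:\overline i\text{ lies in a strictly higher row than }\overline{i+1}\}$. $T,T'$ are connected by a Knuth move if $T'$ is obtained from $T$ by exchanging $\overline i$ and $\overline{i+1}$ for some $i$ and neither of $\tau(T),\tau(T')$ contains the other; $\mathcal A_\lambda$ is the graph on tabloids of shape $\lambda$ with these edges. For $i\in\mathbb Z$, the reverse row superstandard tabloid of shape $\lambda$ with start $i$ has last row $T_k=\{\overline i,\overline{i+1},\dots,\overline{i+\lambda_k-1}\}$, next row $T_{k-1}=\{\overline{i+\lambda_k},\dots,\overline{i+\lambda_k+\lambda_{k-1}-1}\}$, and so on upward. The column superstandard tabloid of shape $\lambda$ with start $i$ is obtained by filling the columns of the Young diagram of $\lambda$, left to right and each from top to bottom, with consecutive entries $\overline i,\overline{i+1},\overline{i+2},\dots$, and then taking $T_r$ to be the set of entries in row $r$. *)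

From Stdlib Require Import Relations.
From mathcomp Require Import all_boot.
Set Implicit Arguments. Unset Strict Implicit. Unset Printing Implicit Defensive.

(* The residues [n̄] = {1̄,...,n̄} are represented by 'I_n (x : 'I_n stands
   for the class val x + nZ).  An integer k (here a nat) denotes the class
   k mod n. *)

Definition memb {n : nat} (A : {set 'I_n}) (k : nat) : bool :=
  [exists x in A, val x == k %% n].

Definition classes_of (n : nat) (s : seq nat) : {set 'I_n} :=
  [set x : 'I_n | has (fun k => val x == k %% n) s].

Definition is_partition (lam : seq nat) (n : nat) : bool :=
  [&& sorted geq lam, all (fun l => 0 < l) lam & sumn lam == n].

(* A tabloid (T_1,...,T_k) is a seq of sets; row r (1-based) is nth set0 T (r-1);
   row 1 (index 0) is the highest. *)
Definition is_tabloid {n : nat} (lam : seq nat) (T : seq {set 'I_n}) : Prop :=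
  [/\ size T = size lam,
      (forall r, r < size T -> #|nth set0 T r| = nth 0 lam r),
      (forall r s, r < size T -> s < size T -> r != s ->
         [disjoint nth set0 T r & nth set0 T s]) &
      \bigcup_(A <- T) A = [set: 'I_n]].

Definition rowof {n : nat} (T : seq {set 'I_n}) (k : nat) : nat :=
  find (fun A => memb A k) T.

Definition tau {n : nat} (T : seq {set 'I_n}) : {set 'I_n} :=
  [set x : 'I_n | rowof T (val x) < rowof T (val x).+1].

(* transposition of the classes ī and (i+1)‾, as a map on representatives *)
Definition swapn (n i : nat) (x : nat) : nat :=
  if x %% n == i %% n then i.+1
  else if x %% n == i.+1 %% n then i else x.

Definition exchange {n : nat} (i : nat) (T : seq {set 'I_n}) : seq {set 'I_n} :=
  [seq [set x : 'I_n | memb A (swapn n i (val x))] | A <- T].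

Definition knuth_move {n : nat} (T T' : seq {set 'I_n}) : Prop :=
  exists i : nat, T' = exchange i T /\
    ~~ (tau T \subset tau T') /\ ~~ (tau T' \subset tau T).

Definition A_edge (n : nat) (lam : seq nat) (T T' : seq {set 'I_n}) : Prop :=
  [/\ is_tabloid lam T, is_tabloid lam T' & knuth_move T T'].

Definition A_connected (n : nat) (lam : seq nat) (T T' : seq {set 'I_n}) : Prop :=
  clos_refl_sym_trans _ (@A_edge n lam) T T'.

Definition rev_row_superstandard (n : nat) (lam : seq nat) (i : nat) : seq {set 'I_n} :=
  mkseq (fun r => classes_of n (iota (i + sumn (drop r.+1 lam)) (nth 0 lam r)))
        (size lam).

(* column superstandard tabloid of shape λ with start i: the cell in row r,
   column c (0-based) receives i + (#cells in columns < c) + r, where the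
   number of cells in columns < c is Σ_j min(λ_j, c). *)
Definition col_superstandard (n : nat) (lam : seq nat) (i : nat) : seq {set 'I_n} :=
  mkseq (fun r => classes_of n
          [seq i + sumn [seq minn l c | l <- lam] + r | c <- iota 0 (nth 0 lam r)])
        (size lam).

From Stdlib Require Import Relations.
From mathcomp Require Import all_boot zify.
Set Implicit Arguments. Unset Strict Implicit. Unset Printing Implicit Defensive.

(* Read a tabloid T through a window of n consecutive residues: its word at p
   lists the rows of p̄, (p+1)‾, ..., (p+n-1)‾.  Exchanging two residues inside
   the window swaps two adjacent letters of the word, and it is a Knuth move
   whenever a neighbouring letter lies between them in the right way; moving the
   window by one step rotates the word.  With these operations the word can be
   sorted into weakly decreasing order: keep a weakly decreasing prefix; if the
   next letter x exceeds its predecessor, carry x leftwards to just after the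
   first letter y < x, carry y to the front and rotate it out of the window.
   Either the prefix grows or its sum increases, so this terminates, and a
   tabloid whose word at q is weakly decreasing is the reverse row superstandard
   tabloid with start q.  The moves used depend only on the word, and the column
   superstandard tabloid with start s has at s the same word for every s, so a
   suitable start connects it to any prescribed reverse row superstandard
   tabloid. *)

Section Residues.
Variable n : nat.
Hypothesis n_gt0 : 0 < n.
Implicit Types (A : {set 'I_n}) (T : seq {set 'I_n}).

Definition residue (k : nat) : 'I_n := Ordinal (ltn_pmod k n_gt0).

Lemma residue_val (x : 'I_n) : residue x = x.
Proof. by apply: val_inj; rewrite /= modn_small. Qed.

Lemma residue_mod k : residue (k %% n) = residue k.
Proof. by apply: val_inj; rewrite /= modn_mod. Qed.

Lemma residue_addI q t t' : t < n -> t' < n -> residue (q + t) = residue (q + t') -> t = t'.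
Proof. by move=> lt_t lt_t' /(congr1 val) /eqP; rewrite /= eqn_modDl !modn_small // => /eqP. Qed.

Lemma residue_window q (x : 'I_n) : exists2 t, t < n & x = residue (q + t).
Proof.
pose f (t : 'I_n) := residue (q + t).
have f_inj : injective f by move=> t t' /residue_addI eq_tt'; apply/val_inj/eq_tt'.
by exists (finv f x) => //; rewrite -[x in x = _](f_finv f_inj).
Qed.

Lemma membE A k : memb A k = (residue k \in A).
Proof.
apply/existsP/idP => [[x /andP[xA /eqP xk]]|kA]; last by exists (residue k); rewrite kA /=.
by have -> : residue k = x by apply: val_inj.
Qed.

Lemma rowofE T k : rowof T k = find (fun A => residue k \in A) T.
Proof. by apply: eq_find => A; rewrite membE. Qed.

Lemma rowof_mod T k : rowof T (k %% n) = rowof T k.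
Proof. by rewrite !rowofE residue_mod. Qed.

Lemma rowof_modS T k : rowof T (k %% n).+1 = rowof T k.+1.
Proof. by rewrite -rowof_mod -addn1 modnDml addn1 rowof_mod. Qed.

Lemma swapn_mod i k : swapn n i (k %% n) %% n = swapn n i k %% n.
Proof. by rewrite /swapn modn_mod; case: ifP => //; case: ifP => //; rewrite modn_mod. Qed.

Lemma swapnK i k : swapn n i (swapn n i k) %% n = k %% n.
Proof.
rewrite /swapn; case: (eqVneq (k %% n) (i %% n)) => [-> | ki].
  by case: ifP => [/eqP -> // | _]; rewrite eqxx.
case: (eqVneq (k %% n) (i.+1 %% n)) => [-> | kSi]; first by rewrite eqxx.
by rewrite (negPf ki) (negPf kSi).
Qed.

Definition swap_residue i (x : 'I_n) : 'I_n := residue (swapn n i x).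

Lemma swap_residueK i : involutive (swap_residue i).
Proof. by move=> x; apply: val_inj; rewrite /= swapn_mod swapnK modn_small. Qed.

Lemma exchangeE i T : exchange i T = [seq swap_residue i @^-1: A | A <- T].
Proof. by apply: eq_map => A; apply/setP => x; rewrite !inE membE. Qed.

Lemma rowof_exchange i T k : rowof (exchange i T) k = rowof T (swapn n i k).
Proof.
rewrite exchangeE !rowofE find_map; apply: eq_find => A /=.
by rewrite inE /swap_residue /= -residue_mod swapn_mod residue_mod.
Qed.

Lemma residue_in_classes q t s : t < n -> all (gtn n) s ->
  (residue (q + t) \in classes_of n [seq q + m | m <- s]) = (t \in s).
Proof.
move=> lt_t /allP s_lt; rewrite inE has_map; apply/hasP/idP => [[m m_s] | t_s].
  by have lt_m := s_lt m m_s; rewrite /= eqn_modDl !modn_small // => /eqP ->.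
by exists t; rewrite //= eqxx.
Qed.

Lemma card_classes_of q s : uniq s -> all (gtn n) s ->
  #|classes_of n [seq q + m | m <- s]| = size s.
Proof.
move=> s_uniq /allP s_lt.
have classesE : classes_of n [seq q + m | m <- s] =i [seq residue (q + m) | m <- s].
  move=> x; have [t lt_t ->] := residue_window q x.
  rewrite residue_in_classes //; last exact/allP.
  apply/idP/mapP => [t_s | [m m_s eq_tm]]; first by exists t.
  by rewrite (residue_addI lt_t (s_lt m m_s) eq_tm).
rewrite (eq_card classesE) (card_uniqP _) ?size_map // map_inj_in_uniq // => m m' m_s m'_s.
exact: residue_addI (s_lt _ m_s) (s_lt _ m'_s).
Qed.

End Residues.

Section Tabloids.
Variables (n : nat) (lam : seq nat).
Hypothesis n_gt0 : 0 < n.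
Implicit Types T : seq {set 'I_n}.

Lemma rowof_lt_size T k : is_tabloid lam T -> rowof T k < size lam.
Proof.
case=> <- _ _ cover; rewrite (rowofE n_gt0) -has_find.
have /bigcupP[A A_T k_A] : residue n_gt0 k \in \bigcup_(A in T) A by rewrite -bigcup_seq cover inE.
by apply/hasP; exists A.
Qed.

Lemma mem_nth_tabloid T r (x : 'I_n) : is_tabloid lam T -> r < size lam ->
  (x \in nth set0 T r) = (rowof T x == r).
Proof.
move=> T_tab r_lt; have x_row := rowof_lt_size x T_tab.
have [size_T _ disj _] := T_tab; rewrite -size_T in r_lt x_row.
rewrite (rowofE n_gt0) residue_val in x_row *; rewrite -has_find in x_row.
set i := find _ T in x_row *; apply/idP/eqP => [x_r | <-]; last by have := nth_find set0 x_row.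
case: (ltngtP i r) => // lt_r; last by rewrite (before_find _ lt_r) in x_r.
have := disj _ _ (ltn_trans lt_r r_lt) r_lt (negbT (ltn_eqF lt_r)).
by move/disjointFr/(_ (nth_find set0 x_row)); rewrite x_r.
Qed.

Lemma exchange_tabloid i T : is_tabloid lam T -> is_tabloid lam (exchange i T).
Proof.
case=> size_T card_T disj cover; rewrite (exchangeE n_gt0).
set s := swap_residue n_gt0 i; have s_inj : injective s := inv_inj (swap_residueK n_gt0 i).
have nth_s r : r < size T ->
    nth set0 [seq s @^-1: A | A : {set 'I_n} <- T] r = s @^-1: nth set0 T r.
  by move=> r_lt; rewrite (nth_map set0).
split; rewrite ?size_map //.
- by move=> r r_lt; rewrite nth_s // card_preimset // card_T.
- move=> r r' r_lt r'_lt neq_rr'; rewrite !nth_s // -!setI_eq0 -preimsetI.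
  by move: (disj r r' r_lt r'_lt neq_rr'); rewrite -setI_eq0 => /eqP ->; rewrite preimset0.
- rewrite big_map -(preimsetT s) -cover.
  by elim: (T) => [|A T' IH]; rewrite ?big_nil ?preimset0 // !big_cons IH preimsetU.
Qed.

Lemma connected_tabloid T T' : A_connected lam T T' -> is_tabloid lam T -> is_tabloid lam T'.
Proof.
suff: A_connected lam T T' -> is_tabloid lam T <-> is_tabloid lam T' by move=> H /H [].
elim=> [U U' [] // | // | U U' _ | U U' U'' _ IH1 _ IH2]; [by symmetry | exact: iff_trans IH1 IH2].
Qed.

Lemma card_rows_from T r : is_tabloid lam T ->
  #|[set x : 'I_n | r <= rowof T x]| = sumn (drop r lam).
Proof.
move=> T_tab; have [size_T card_T _ _] := T_tab.
have [m] := ubnP (size lam - r); elim: m r => // m IH r lt_m.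
have [r_lt | r_ge] := ltnP r (size lam); last first.
  rewrite drop_oversize //; apply/eqP; rewrite cards_eq0; apply/eqP/setP => x; rewrite !inE.
  by have := rowof_lt_size x T_tab; lia.
rewrite (drop_nth 0 r_lt) /= -(IH r.+1) -?card_T ?size_T //; last by lia.
rewrite -(cardsID [set x : 'I_n | rowof T x == r] [set x : 'I_n | r <= rowof T x]).
congr (_ + _); apply: eq_card => x.
  by rewrite !inE mem_nth_tabloid //; case: eqP => [-> | ]; lia.
by rewrite !inE; lia.
Qed.

End Tabloids.

Definition swap_next (j k : nat) : nat :=
  if k == j then j.+1 else if k == j.+1 then j else k.

Lemma swap_next_l j : swap_next j j = j.+1.
Proof. by rewrite /swap_next eqxx. Qed.

Lemma swap_next_r j : swap_next j j.+1 = j.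
Proof. by rewrite /swap_next eqxx ifN_eq // neq_ltn ltnSn orbT. Qed.

Lemma swap_next_id j k : k != j -> k != j.+1 -> swap_next j k = k.
Proof. by rewrite /swap_next => /negPf-> /negPf->. Qed.

(* [f \o move_pos lo hi] is [f] with its letter at [hi] moved to position [lo]. *)
Definition move_pos (lo hi k : nat) : nat :=
  if k == lo then hi else if lo < k <= hi then k.-1 else k.

Lemma move_pos_id lo k : move_pos lo lo k = k.
Proof. by rewrite /move_pos; repeat case: ifP; lia. Qed.

Lemma move_pos_step lo hi k : lo <= hi -> swap_next hi (move_pos lo hi k) = move_pos lo hi.+1 k.
Proof. by rewrite /swap_next /move_pos; repeat case: ifP; lia. Qed.

Definition desc_prefix f L := forall k, 0 < k < L -> f k <= f k.-1.

Lemma desc_prefix_le f L i k : desc_prefix f L -> i <= k < L -> f k <= f i.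
Proof.
move=> f_desc /andP[]; elim: k => [|k IH] le_ik lt_k; first by have -> : i = 0 by lia.
have [-> // | lt_ik] := eqVneq i k.+1.
by apply: leq_trans (f_desc k.+1 _) (IH _ _); lia.
Qed.

Section Words.
Variables (n : nat) (lam : seq nat).
Hypothesis n_gt0 : 0 < n.
Implicit Types (T : seq {set 'I_n}) (f g : nat -> nat).

Definition has_word T p f := forall k, k < n -> rowof T (p + k) = f k.

(* Being stated for all tabloids and window starts with a given word, these
   statements can be reused for every start of the column superstandard tabloid. *)
Definition reaches d f g := forall T p, is_tabloid lam T -> has_word T p f ->
  exists2 T', A_connected lam T T' & has_word T' (p + d) g.

Lemma reaches_refl f : reaches 0 f f.
Proof. by move=> T p _ T_f; exists T; [apply: rst_refl | rewrite addn0]. Qed.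

Lemma reaches_trans d e f g h : reaches d f g -> reaches e g h -> reaches (d + e) f h.
Proof.
move=> fg gh T p T_tab T_f; have [T1 TT1 T1_g] := fg T p T_tab T_f.
have [T2 T1T2 T2_h] := gh T1 _ (connected_tabloid TT1 T_tab) T1_g.
by exists T2; [apply: rst_trans T1T2 | rewrite addnA].
Qed.

Lemma reaches_eq d f g g' : reaches d f g -> (forall k, k < n -> g k = g' k) -> reaches d f g'.
Proof.
move=> fg eq_g T p T_tab T_f; have [T' TT' T'_g] := fg T p T_tab T_f.
by exists T' => // k lt_k; rewrite T'_g ?eq_g.
Qed.

Lemma reaches_rotate f : reaches 1 f (f \o (fun k => k.+1 %% n)).
Proof.
move=> T p _ T_f; exists T => [|k lt_k /=]; first exact: rst_refl.
rewrite -addnA add1n; have [lt_Sk | ge_Sk] := ltnP k.+1 n; first by rewrite modn_small // T_f.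
have -> : k.+1 = n by apply/eqP; rewrite eqn_leq ge_Sk lt_k.
by rewrite modnn -T_f // addn0 -(rowof_mod n_gt0) modnDr rowof_mod.
Qed.

Lemma rowof_exchange_window T p j k : j.+1 < n -> k < n ->
  rowof (exchange (p + j) T) (p + k) = rowof T (p + swap_next j k).
Proof.
move=> lt_j lt_k; rewrite (rowof_exchange n_gt0) /swapn /swap_next -addnS !eqn_modDl.
rewrite !modn_small //; last exact: ltnW.
by case: eqP => _; [rewrite addnS | case: eqP].
Qed.

Lemma has_word_exchange T p f j : j.+1 < n -> has_word T p f ->
  has_word (exchange (p + j) T) p (f \o swap_next j).
Proof.
move=> lt_j T_f k lt_k; rewrite rowof_exchange_window // T_f //.
by rewrite /swap_next; case: eqP => _ //; case: eqP => _ //; apply: ltnW.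
Qed.

Lemma tau_window T p f k : has_word T p f -> k.+1 < n ->
  (residue n_gt0 (p + k) \in tau T) = (f k < f k.+1).
Proof.
by move=> T_f lt_k; rewrite inE /= (rowof_modS n_gt0) (rowof_mod n_gt0) -addnS !T_f // ltnW.
Qed.

(* The two witnesses show that neither of tau T and tau (exchange (p + j) T)
   contains the other. *)
Lemma reaches_swap f j : j.+1 < n ->
  (exists k, [/\ k.+1 < n, f k < f k.+1 & f (swap_next j k.+1) <= f (swap_next j k)]) ->
  (exists k, [/\ k.+1 < n, f (swap_next j k) < f (swap_next j k.+1) & f k.+1 <= f k]) ->
  reaches 0 f (f \o swap_next j).
Proof.
move=> lt_j [k1 [lt_k1 asc1 desc1]] [k2 [lt_k2 asc2 desc2]] T p T_tab T_f.
have T'_f := has_word_exchange lt_j T_f.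
exists (exchange (p + j) T); last by rewrite addn0.
apply: rst_step; split => //; first exact: exchange_tabloid.
exists (p + j); split => //.
split; apply/subsetPn.
- by exists (residue n_gt0 (p + k1)); rewrite (tau_window T_f, tau_window T'_f) //= -leqNgt.
- by exists (residue n_gt0 (p + k2)); rewrite (tau_window T_f, tau_window T'_f) //= -leqNgt.
Qed.

Lemma reaches_swap_left f j : 0 < j -> j.+1 < n -> f j <= f j.-1 -> f j.-1 < f j.+1 ->
  reaches 0 f (f \o swap_next j).
Proof.
move=> j_gt0 lt_j le_f lt_f; apply: reaches_swap => //.
- by exists j; rewrite swap_next_l swap_next_r; split; lia.
- by exists j.-1; rewrite prednK // swap_next_l swap_next_id; [split | |]; lia.
Qed.

Lemma reaches_swap_right f j : j.+2 < n -> f j.+1 < f j.+2 -> f j.+2 <= f j ->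
  reaches 0 f (f \o swap_next j).
Proof.
move=> lt_j lt_f le_f; apply: reaches_swap; first exact: ltnW.
- by exists j.+1; rewrite swap_next_r swap_next_id; [split | |]; lia.
- by exists j; rewrite swap_next_l swap_next_r; split; lia.
Qed.

Lemma reaches_move_id f lo : reaches 0 f (f \o move_pos lo lo).
Proof. by refine (reaches_eq (@reaches_refl f) _) => k _ /=; rewrite move_pos_id. Qed.

Lemma reaches_move_left f lo hi : 0 < lo <= hi -> hi < n ->
  (forall k, lo <= k < hi -> f k <= f k.-1) -> (forall k, lo.-1 <= k < hi -> f k < f hi) ->
  reaches 0 f (f \o move_pos lo hi).
Proof.
elim: hi f => [|hi IH] f lo_hi lt_hi f_desc f_lt; first by lia.
have [<- | lt_lo] := eqVneq lo hi.+1; first exact: reaches_move_id.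
have swap_lt k : k < hi -> swap_next hi k = k by move=> ?; rewrite swap_next_id; lia.
have swap_step : reaches 0 f (f \o swap_next hi).
  by apply: reaches_swap_left => //; [lia | apply: f_desc | apply: f_lt]; lia.
have move_rest : reaches 0 (f \o swap_next hi) (f \o swap_next hi \o move_pos lo hi).
  apply: IH => [| | k k_in | k k_in] /=; [lia | exact: ltnW | |].
    by have := f_desc k; rewrite !swap_lt; lia.
  by have := f_lt k; rewrite swap_lt ?swap_next_l; lia.
refine (reaches_eq (reaches_trans swap_step move_rest) _) => k _ /=.
by rewrite move_pos_step //; lia.
Qed.

Lemma reaches_move_right f lo hi : lo <= hi -> hi.+1 < n ->
  (forall k, lo < k < hi -> f k <= f k.-1) -> f hi < f hi.+1 -> (lo < hi -> f hi.+1 <= f hi.-1) ->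
  reaches 0 f (f \o move_pos lo hi).
Proof.
elim: hi f => [|hi IH] f lo_hi lt_hi f_desc f_lt f_le.
  by rewrite (_ : lo = 0); [exact: reaches_move_id | lia].
have [<- | lt_lo] := eqVneq lo hi.+1; first exact: reaches_move_id.
have swap_lt k : k < hi -> swap_next hi k = k by move=> ?; rewrite swap_next_id; lia.
have f_le' : f hi.+2 <= f hi by apply: f_le; lia.
have swap_step : reaches 0 f (f \o swap_next hi) by apply: reaches_swap_right.
have move_rest : reaches 0 (f \o swap_next hi) (f \o swap_next hi \o move_pos lo hi).
  apply: IH => [| | k k_in | | lo_lt] /=; [lia | exact: ltnW | | |].
  - by have := f_desc k; rewrite !swap_lt; lia.
  - by rewrite swap_next_l swap_next_r; apply: leq_trans f_le'.
  - by have := f_desc hi; rewrite swap_next_r swap_lt; lia.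
refine (reaches_eq (reaches_trans swap_step move_rest) _) => k _ /=.
by rewrite move_pos_step //; lia.
Qed.

(* The letter x at L is moved next to the letter at j, which is moved to the front
   and rotated out of the window. *)
Definition bump_pos j L k := move_pos j.+1 L (move_pos 0 j (k.+1 %% n)).

Lemma bump_pos_prefix j L k : j < L -> L < n -> k < L -> bump_pos j L k = if k == j then L else k.
Proof. by move=> *; rewrite /bump_pos modn_small /move_pos; [repeat case: ifP | ]; lia. Qed.

Lemma bump_pos_lt j L k : j < L -> L < n -> bump_pos j L k < n.
Proof.
by move=> *; have := ltn_pmod k.+1 n_gt0; rewrite /bump_pos /move_pos; repeat case: ifP; lia.
Qed.

Lemma reaches_bump f j L : j < L -> L < n -> desc_prefix f L -> f j < f L ->
  (forall k, k < j -> f L <= f k) -> reaches 1 f (f \o bump_pos j L).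
Proof.
move=> lt_j lt_L f_desc lt_fj ge_fL.
pose g := f \o move_pos j.+1 L.
have to_j : reaches 0 f g.
  apply: reaches_move_left => // k k_in; first by apply: f_desc; lia.
  by apply: leq_ltn_trans lt_fj; apply: (desc_prefix_le f_desc); lia.
have g_lt k : k <= j -> g k = f k by move=> ?; rewrite /g /= /move_pos; repeat case: ifP; lia.
have g_Sj : g j.+1 = f L by rewrite /g /= /move_pos eqxx.
have to_0 : reaches 0 g (g \o move_pos 0 j).
  apply: reaches_move_right => [| | k k_in | | j_gt0]; [lia | lia | | |].
  - by have := f_desc k; rewrite !g_lt; lia.
  - by rewrite g_lt // g_Sj.
  - by have := ge_fL j.-1; rewrite g_Sj g_lt; lia.
exact: (reaches_eq (reaches_trans (reaches_trans to_j to_0) (@reaches_rotate _))).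
Qed.

Definition potential f L := L + \sum_(k < L) f k.

Lemma potential_le K f L : L <= n -> (forall k, k < n -> f k < K) -> potential f L <= n + n * K.
Proof.
move=> le_L f_lt; rewrite /potential leq_add //; apply: leq_trans (leq_mul le_L (leqnn K)).
rewrite -[in L * K](card_ord L) -sum_nat_const; apply: leq_sum => k _.
by apply/ltnW/f_lt/(leq_trans (ltn_ord k)).
Qed.

Lemma reaches_step K f L : L < n -> desc_prefix f L -> (forall k, k < n -> f k < K) ->
  exists d g L', [/\ reaches d f g, L' <= n, desc_prefix g L', (forall k, k < n -> g k < K)
                   & potential f L < potential g L'].
Proof.
move=> lt_L f_desc f_lt.
have [/andP[L_gt0 f_asc] | f_ext] := boolP ((0 < L) && (f L.-1 < f L)); last first.
  exists 0, f, L.+1; split => //; first exact: reaches_refl.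
    move=> k /andP[k_gt0]; rewrite ltnS leq_eqVlt => /orP[/eqP eq_kL | lt_k].
      by move: f_ext; rewrite -eq_kL k_gt0 /= -leqNgt.
    by apply: f_desc; lia.
  by rewrite /potential big_ord_recr /=; lia.
have exj : exists j, (j < L) && (f j < f L) by exists L.-1; rewrite f_asc; lia.
case: (ex_minnP exj) => j /andP[lt_j lt_fj] j_min.
have ge_fL k : k < j -> f L <= f k.
  by move=> lt_k; rewrite leqNgt; apply/negP => lt_fk; have := j_min k; rewrite lt_fk; lia.
have g_prefix := bump_pos_prefix lt_j lt_L.
exists 1, (f \o bump_pos j L), L; split => //.
- exact: (reaches_bump lt_j lt_L f_desc lt_fj ge_fL).
- exact: ltnW.
- move=> k /andP[k_gt0 lt_k] /=; rewrite !g_prefix //; last by lia.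
  case: (eqVneq k j) => [eq_kj | _]; first by subst k; rewrite ifN_eq; [apply: ge_fL | ]; lia.
  case: (eqVneq k.-1 j) => [eq_kj | _]; last by apply: f_desc; lia.
  by apply/ltnW/(leq_ltn_trans _ lt_fj); rewrite -eq_kj; apply: f_desc; lia.
- by move=> k _; apply/f_lt/bump_pos_lt.
rewrite ltn_add2l (bigD1 (Ordinal lt_j)) // [X in _ < X](bigD1 (Ordinal lt_j)) //=.
rewrite g_prefix // eqxx -addSn; apply: leq_add lt_fj _; apply: leq_sum => k ne_kj.
rewrite g_prefix // ifN //.
Qed.

Lemma reaches_desc K f L : L <= n -> desc_prefix f L -> (forall k, k < n -> f k < K) ->
  exists d g, reaches d f g /\ desc_prefix g n.
Proof.
have [m] := ubnP (n + n * K - potential f L); elim: m f L => // m IH f L lt_m le_L f_desc f_lt.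
have [lt_L | ge_L] := ltnP L n; last first.
  by exists 0, f; split; [exact: reaches_refl | have <- : L = n by lia].
have [d [g [L' [fg le_L' g_desc g_lt lt_pot]]]] := reaches_step lt_L f_desc f_lt.
have [|e [h [gh h_desc]]] := IH g L' _ le_L' g_desc g_lt.
  by have := potential_le le_L' g_lt; lia.
by exists (d + e), h; split; first exact: reaches_trans fg gh.
Qed.

End Words.

Lemma card_ord_lt n m : m <= n -> #|[set i : 'I_n | i < m]| = m.
Proof.
move=> le_m; have widen_inj : injective (widen_ord le_m) by move=> i j /(congr1 val) /= /val_inj.
rewrite -[RHS]card_ord -(card_imset _ widen_inj).
apply: eq_card => i; rewrite inE; apply/idP/imsetP => [lt_i | [j _ ->]]; last by case: j.
by exists (Ordinal lt_i) => //; apply: val_inj.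
Qed.

Lemma downward_closed_card n (P : pred nat) t : (forall i j, i <= j < n -> P j -> P i) ->
  t < n -> P t = (t < #|[set i : 'I_n | P i]|).
Proof.
move=> P_down lt_t; apply/idP/idP => [Pt | lt_card].
  rewrite -[t.+1](card_ord_lt lt_t); apply/subset_leq_card/subsetP => i.
  by rewrite !inE => le_it; apply: P_down Pt; lia.
apply: contraLR lt_card => nPt; rewrite -leqNgt -[X in _ <= X](card_ord_lt (ltnW lt_t)).
apply/subset_leq_card/subsetP => i; rewrite !inE => Pi; rewrite ltnNge.
by apply: contra nPt => le_ti; apply: P_down Pi; rewrite le_ti ltn_ord.
Qed.

Section ReverseRow.
Variables (n : nat) (lam : seq nat).
Hypothesis n_gt0 : 0 < n.
Hypothesis lam_sum : sumn lam = n.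

Lemma sumn_drop_le r : sumn (drop r lam) <= n.
Proof. by rewrite -lam_sum -[in X in _ <= X](cat_take_drop r lam) sumn_cat leq_addl. Qed.

Lemma desc_word_rows_from (T : seq {set 'I_n}) q g r t : is_tabloid lam T -> has_word T q g ->
  desc_prefix g n -> t < n -> (r <= g t) = (t < sumn (drop r lam)).
Proof.
move=> T_tab T_g g_desc lt_t.
pose shift (i : 'I_n) := residue n_gt0 (q + i).
have shift_inj : injective shift by move=> i j /residue_addI eq_ij; apply/val_inj/eq_ij.
have preim_rows : shift @^-1: [set x : 'I_n | r <= rowof T x] = [set i : 'I_n | r <= g i].
  by apply/setP => i; rewrite !inE /= (rowof_mod n_gt0) T_g.
rewrite -(card_rows_from n_gt0 r T_tab) -(card_preimset _ shift_inj) preim_rows.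
apply: (@downward_closed_card n (fun i => r <= g i)) lt_t => i j /andP[le_ij lt_j] le_rj.
by apply: leq_trans le_rj _; apply: (desc_prefix_le g_desc); rewrite le_ij.
Qed.

Lemma desc_word_rev_row T q g : is_tabloid lam T -> has_word T q g -> desc_prefix g n ->
  T = rev_row_superstandard n lam q.
Proof.
move=> T_tab T_g g_desc; have [size_T _ _ _] := T_tab.
apply: (@eq_from_nth _ set0); first by rewrite size_mkseq.
move=> i; rewrite size_T => lt_i; rewrite nth_mkseq //; apply/setP => x.
have [t lt_t ->] := residue_window n_gt0 q x.
have rows_i := drop_nth 0 lt_i; have := sumn_drop_le i; rewrite rows_i /= => rows_le.
rewrite (mem_nth_tabloid n_gt0 _ T_tab) // (rowof_mod n_gt0) T_g // iotaDl residue_in_classes //.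
  have rows_from r := desc_word_rows_from r T_tab T_g g_desc lt_t.
  by rewrite mem_iota eqn_leq -ltnS ltnNge !rows_from rows_i /=; lia.
by apply/allP => m; rewrite mem_iota /=; lia.
Qed.

End ReverseRow.

Definition cols_before (lam : seq nat) (c : nat) : nat := sumn [seq minn l c | l <- lam].

Definition col_size (lam : seq nat) (c : nat) : nat := count (fun l => c < l) lam.

Section Columns.
Variable lam : seq nat.

Lemma cols_beforeS c : cols_before lam c.+1 = cols_before lam c + col_size lam c.
Proof. by rewrite /cols_before /col_size; elim: lam => //= l s ->; lia. Qed.

Lemma cols_before0 : cols_before lam 0 = 0.
Proof. by rewrite /cols_before; elim: lam => //= l s ->; rewrite minn0. Qed.

Lemma cols_before_mono : {homo cols_before lam : c c' / c <= c'}.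
Proof. by apply: homo_leq => [// | | c]; [exact: leq_trans | rewrite cols_beforeS leq_addr]. Qed.

Lemma cols_before_sumn c : all (fun l => l <= c) lam -> cols_before lam c = sumn lam.
Proof.
by rewrite /cols_before; elim: lam => //= l s IH /andP[le_l /IH ->]; rewrite (minn_idPl le_l).
Qed.

Lemma cols_before_le c : cols_before lam c <= sumn lam.
Proof. by rewrite /cols_before; elim: lam => //= l s IH; apply: leq_add (geq_minl _ _) IH. Qed.

Hypothesis lam_sorted : sorted geq lam.

Lemma lt_col_size r c : r < size lam -> (r < col_size lam c) = (c < nth 0 lam r).
Proof.
rewrite /col_size; elim: lam lam_sorted r => //= l s IH l_s r lt_r.
have /allP s_le : all (fun l' => l' <= l) s.
  by apply: order_path_min l_s => y x z le_yx le_zy; apply: leq_trans le_zy le_yx.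
have [lt_cl | le_lc] := ltnP c l.
  by case: r lt_r => //= r lt_r; rewrite add1n ltnS IH ?(path_sorted l_s).
rewrite (eq_in_count (a2 := pred0)) ?count_pred0 => [|x /s_le /=]; last by lia.
case: r lt_r => [|r] lt_r /=; first by move: le_lc; rewrite leqNgt => /negPf ->.
by apply/esym/negbTE; rewrite -leqNgt (leq_trans _ le_lc) // s_le // mem_nth.
Qed.

Lemma cell_ltS r c : r < size lam -> c < nth 0 lam r ->
  cols_before lam c + r < cols_before lam c.+1.
Proof. by move=> lt_r lt_c; rewrite cols_beforeS ltn_add2l lt_col_size. Qed.

Lemma cell_inj r c r' c' : r < size lam -> c < nth 0 lam r -> r' < size lam -> c' < nth 0 lam r' ->
  cols_before lam c + r = cols_before lam c' + r' -> r = r' /\ c = c'.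
Proof.
move=> lt_r lt_c lt_r' lt_c' eq_cells.
have cell_lt := cell_ltS lt_r lt_c; have cell_lt' := cell_ltS lt_r' lt_c'.
case: (ltngtP c c') => [lt_cc' | lt_c'c | eq_cc']; last by subst c'; split => //; lia.
  by have := cols_before_mono lt_cc'; lia.
by have := cols_before_mono lt_c'c; lia.
Qed.

Lemma cell_cover t : t < sumn lam ->
  exists r c, [/\ r < size lam, c < nth 0 lam r & t = cols_before lam c + r].
Proof.
have all_le : all (fun l => l <= sumn lam) lam.
  by apply/allP => l /perm_to_rem/perm_sumn ->; apply: leq_addr.
rewrite -(cols_before_sumn all_le); elim: (sumn lam) => [|c IH]; first by rewrite cols_before0.
have [/IH // | ge_t] := ltnP t (cols_before lam c).
rewrite cols_beforeS => lt_t; have lt_r : t - cols_before lam c < col_size lam c by lia.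
have lt_rs : t - cols_before lam c < size lam by apply: leq_trans lt_r (count_size _ _).
by exists (t - cols_before lam c), c; rewrite -lt_col_size //; split => //; lia.
Qed.

End Columns.

Section ColumnSuperstandard.
Variables (n : nat) (lam : seq nat).
Hypothesis n_gt0 : 0 < n.
Hypothesis lam_sorted : sorted geq lam.
Hypothesis lam_sum : sumn lam = n.

Definition col_cells r := [seq cols_before lam c + r | c <- iota 0 (nth 0 lam r)].

Lemma col_superstandardE s :
  col_superstandard n lam s =
  mkseq (fun r => classes_of n [seq s + m | m <- col_cells r]) (size lam).
Proof.
by apply: eq_mkseq => r; rewrite -map_comp; congr classes_of; apply: eq_map => c /=; rewrite addnA.
Qed.

Lemma mem_col_cells r t :
  reflect (exists2 c, c < nth 0 lam r & t = cols_before lam c + r) (t \in col_cells r).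
Proof.
apply: (iffP mapP) => [[c] | [c lt_c ->]]; last by exists c; rewrite ?mem_iota.
by rewrite mem_iota => c_in ->; exists c.
Qed.

Lemma col_cells_lt r : r < size lam -> all (gtn n) (col_cells r).
Proof.
move=> lt_r; apply/allP => t /mem_col_cells [c lt_c ->] /=.
by rewrite -lam_sum; apply: leq_trans (cell_ltS lam_sorted lt_r lt_c) (cols_before_le _ _).
Qed.

Lemma col_superstandard_tabloid s : is_tabloid lam (col_superstandard n lam s).
Proof.
rewrite col_superstandardE; split; rewrite ?size_mkseq //.
- move=> r lt_r; rewrite nth_mkseq // card_classes_of ?col_cells_lt ?size_map ?size_iota //.
  rewrite map_inj_in_uniq ?iota_uniq // => c c'; rewrite !mem_iota /= => lt_c lt_c' eq_cells.
  exact: (cell_inj lam_sorted lt_r lt_c lt_r lt_c' eq_cells).2.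
- move=> r r' lt_r lt_r' neq_rr'; rewrite !nth_mkseq // -setI_eq0; apply/eqP/setP => x.
  have [t lt_t ->] := residue_window n_gt0 s x; rewrite in_setI in_set0.
  apply/negbTE/negP => /andP[]; rewrite !residue_in_classes ?col_cells_lt //.
  move=> /mem_col_cells[c lt_c ->] /mem_col_cells[c' lt_c'].
  by case/(cell_inj lam_sorted lt_r lt_c lt_r' lt_c') => eq_rr'; rewrite eq_rr' eqxx in neq_rr'.
- apply/setP => x; rewrite in_setT bigcup_seq; have [t lt_t ->] := residue_window n_gt0 s x.
  have [r [c [lt_r lt_c eq_t]]] := cell_cover lam_sorted (leq_trans lt_t (eq_leq (esym lam_sum))).
  apply/bigcupP; exists (classes_of n [seq s + m | m <- col_cells r]).
    by apply: map_f; rewrite mem_iota.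
  by rewrite residue_in_classes ?col_cells_lt //; apply/mem_col_cells; exists c.
Qed.

Lemma has_word_col_superstandard s :
  has_word (col_superstandard n lam s) s (rowof (col_superstandard n lam 0)).
Proof.
move=> k _; rewrite !(rowofE n_gt0) /col_superstandard /mkseq !find_map; apply: eq_find => r /=.
rewrite !inE !has_map; apply: eq_has => c /=.
by rewrite -addnA eqn_modDl add0n.
Qed.

End ColumnSuperstandard.

Lemma rev_row_superstandard_shift n lam i m :
  rev_row_superstandard n lam (i + m * n) = rev_row_superstandard n lam i.
Proof.
apply: eq_mkseq => r; apply/setP => x; rewrite !inE iotaDl [in RHS]iotaDl !has_map.
by apply: eq_has => k /=; rewrite addnAC addnC modnMDl.
Qed.

Lemma connected_rev_row_superstandard n lam (n_gt0 : 0 < n) f : sumn lam = n ->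
  (forall k, k < n -> f k < size lam) -> exists N, forall T p, is_tabloid lam T ->
    has_word T p f -> A_connected lam T (rev_row_superstandard n lam (p + N)).
Proof.
move=> lam_sum f_lt; have desc0 : desc_prefix f 0 by move=> k; lia.
have [N [g [fg g_desc]]] := reaches_desc lam n_gt0 (leq0n n) desc0 f_lt.
exists N => T p T_tab T_f; have [T' TT' T'_g] := fg T p T_tab T_f.
by rewrite -(desc_word_rev_row n_gt0 lam_sum (connected_tabloid TT' T_tab) T'_g g_desc).
Qed.

Theorem lemma7p4 (n : nat) (lam : seq nat) :
  0 < n -> is_partition lam n ->
  forall T : seq {set 'I_n}, is_tabloid lam T ->
    (exists i : nat, @A_connected n lam T (rev_row_superstandard n lam i)) /\
    (exists i : nat, @A_connected n lam T (col_superstandard n lam i)).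
Proof.
move=> n_gt0 /and3P[lam_sorted _ /eqP lam_sum] T T_tab.
have word_lt (U : seq {set 'I_n}) : is_tabloid lam U -> forall k, k < n -> rowof U k < size lam.
  by move=> U_tab k _; exact: (rowof_lt_size n_gt0 k U_tab).
have [N T_N] := connected_rev_row_superstandard n_gt0 lam_sum (word_lt T T_tab).
have T_rev : A_connected lam T (rev_row_superstandard n lam N) := T_N T 0 T_tab (fun k _ => erefl).
split; first by exists N.
have col_tab := col_superstandard_tabloid n_gt0 lam_sorted lam_sum.
have [M col_M] := connected_rev_row_superstandard n_gt0 lam_sum (word_lt _ (col_tab 0)).
(* the start s = N + M * n.-1 satisfies s + M = N (mod n) *)
exists (N + M * n.-1); apply: rst_trans T_rev _; apply: rst_sym.
have -> : rev_row_superstandard n lam N = rev_row_superstandard n lam (N + M * n.-1 + M).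
  by rewrite -addnA -mulnSr prednK // rev_row_superstandard_shift.
exact: (col_M _ _ (col_tab _) (has_word_col_superstandard lam n_gt0 _)).
Qed.
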